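(* Let $y_1,\dots,y_l\in\mathbf{Y}$ be a training set, let $y'\in\mathbf{Y}$ be a postulated label, and let $\tau\in[0,1]$. Then the leave-one-out cross-conformal p-value equals the full conformal p-value. Equivalently, with $K=l$ folds, the quantities $A^{\mathrm{CCP}},B^{\mathrm{CCP}}$ coincide with $A^{\mathrm{CP}},B^{\mathrm{CP}}$, and hence $A^{\mathrm{CCP}}+\tau B^{\mathrm{CCP}}=A^{\mathrm{CP}}+\tau B^{\mathrm{CP}}$.
   Context: Setting: $\mathbf{Y}$ is a finite label set, the training set is $y_1,\dots,y_l\in\mathbf{Y}$, and $n_u$ denotes the number of $i$ with $y_i=u$. Full conformal p-value for the postulated label $y'$: $p^{\mathrm{CP}}_{y'}=A^{\mathrm{CP}}+\tau B^{\mathrm{CP}}$, where \[ A^{\mathrm{CP}}:=\frac{\sum_{u\in\mathbf{Y}\setminus\{y'\}:\,n_u<n_{y'}+1}n_u}{l+1},\qquad B^{\mathrm{CP}}:=\frac{\sum_{u:\,n_u=n_{y'}+1}n_u+n_{y'}+1}{l+1}. \] Leave-one-out cross-conformal p-value (number of folds $K=l$, with fold $k$ consisting of the single observation $y_k$): for $k=1,\dots,l$ and $u\in\mathbf{Y}$, let $n_{k,u}$ be the number of $i\ne k$ with $y_i=u$, and let $n'_{k,u}:=1$ if $y_k=u$ and $0$ otherwise. Set \[ A_k:=\sum_{u:\,n_{k,u}<n_{k,y'}}n'_{k,u},\qquad B_k:=\sum_{u:\,n_{k,u}=n_{k,y'}}n'_{k,u}, \] and \[ A^{\mathrm{CCP}}:=\frac{\sum_{k=1}^lA_k}{l+1},\qquad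 B^{\mathrm{CCP}}:=\frac{\sum_{k=1}^lB_k+1}{l+1}. \] The leave-one-out cross-conformal p-value is $p^{\mathrm{CCP}}_{y'}:=A^{\mathrm{CCP}}+\tau B^{\mathrm{CCP}}$. *)

From mathcomp Require Import all_boot all_order all_algebra.
Set Implicit Arguments. Unset Strict Implicit. Unset Printing Implicit Defensive.
Import Order.TTheory GRing.Theory Num.Theory.

Definition cnt (Y : finType) (l : nat) (y : 'I_l -> Y) (u : Y) : nat :=
  #|[set i : 'I_l | y i == u]|.

Definition cnt_k (Y : finType) (l : nat) (y : 'I_l -> Y) (k : 'I_l) (u : Y) : nat :=
  #|[set i : 'I_l | (i != k) && (y i == u)]|.

Definition cnt'_k (Y : finType) (l : nat) (y : 'I_l -> Y) (k : 'I_l) (u : Y) : nat :=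
  (y k == u : nat).

Local Open Scope ring_scope.

Section Pvals.
Variables (R : realFieldType) (Y : finType) (l : nat) (y : 'I_l -> Y) (y' : Y).

Definition A_CP : R :=
  (\sum_(u : Y | (u != y') && (cnt y u < (cnt y y').+1)%N) cnt y u)%N%:R / (l.+1)%:R.

Definition B_CP : R :=
  ((\sum_(u : Y | cnt y u == (cnt y y').+1) cnt y u) + cnt y y' + 1)%N%:R / (l.+1)%:R.

Definition p_CP (tau : R) : R := A_CP + tau * B_CP.

Definition A_k (k : 'I_l) : nat :=
  (\sum_(u : Y | (cnt_k y k u < cnt_k y k y')%N) cnt'_k y k u)%N.

Definition B_k (k : 'I_l) : nat :=
  (\sum_(u : Y | cnt_k y k u == cnt_k y k y') cnt'_k y k u)%N.

Definition A_CCP : R := (\sum_(k < l) A_k k)%N%:R / (l.+1)%:R.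

Definition B_CCP : R := ((\sum_(k < l) B_k k) + 1)%N%:R / (l.+1)%:R.

Definition p_CCP (tau : R) : R := A_CCP + tau * B_CCP.

End Pvals.

(** Removing the single test observation y_k only lowers the count of its own
    label by one.  Hence fold k contributes to A exactly when y_k <> y' and
    n_{y_k} - 1 < n_{y'}, and to B exactly when y_k = y' or
    n_{y_k} - 1 = n_{y'}.  Summing these indicators over k groups the folds by
    label, each label u being counted n_u times, which gives the full conformal
    sums (the label y' itself yields the term n_{y'} of B). *)

From mathcomp Require Import all_boot all_order all_algebra.
From mathcomp Require Import zify.
Import Order.TTheory GRing.Theory Num.Theory.

Lemma sum_nat_eq (Y : finType) (v : Y) (P : pred Y) :
  (\sum_(u | P u) (v == u : nat))%N = P v.
Proof.
rewrite big_mkcond (bigD1 v) //= big1 ?addn0; first by rewrite eqxx; case: (P v).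
by move=> u nu; rewrite eq_sym (negbTE nu); case: (P u).
Qed.

Section LeaveOneOut.

Variables (Y : finType) (l : nat) (y : 'I_l -> Y).

Lemma cnt_kE (k : 'I_l) (u : Y) : cnt_k y k u = (cnt y u - (y k == u))%N.
Proof.
rewrite /cnt_k /cnt; have [e|ne] := eqVneq (y k) u.
  rewrite [#|[set i | y i == u]|](cardsD1 k) inE e eqxx /= add1n subn1 /=.
  by apply: eq_card => i; rewrite !inE.
rewrite subn0; apply: eq_card => i; rewrite !inE.
by case: eqP => // ->; rewrite (negbTE ne) andbF.
Qed.

Lemma cnt_label_gt0 (k : 'I_l) : (0 < cnt y (y k))%N.
Proof. by rewrite /cnt card_gt0; apply/set0Pn; exists k; rewrite inE. Qed.

Lemma sum_pred_label (P : pred Y) :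
  (\sum_(k < l) P (y k))%N = (\sum_(u | P u) cnt y u)%N.
Proof.
rewrite (eq_bigr (fun k => if P (y k) then 1 else 0)%N) -?big_mkcond;
  last by move=> k _; case: (P _).
rewrite (partition_big y P) //=; apply: eq_bigr => u Pu.
rewrite sum1_card /cnt cardsE; apply: eq_card => k; rewrite !unfold_in.
by apply: andb_idl => /eqP ->.
Qed.

Variable y' : Y.

Lemma A_kE (k : 'I_l) :
  A_k y y' k = ((y k != y') && (cnt y (y k) < (cnt y y').+1))%N.
Proof.
rewrite /A_k sum_nat_eq !cnt_kE eqxx.
have := cnt_label_gt0 k; have [->|_] := eqVneq (y k) y'; first by rewrite ltnn.
by move=> ?; congr nat_of_bool; apply/idP/idP; lia.
Qed.

Lemma B_kE (k : 'I_l) :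
  B_k y y' k = ((y k == y') || (cnt y (y k) == (cnt y y').+1))%N.
Proof.
rewrite /B_k sum_nat_eq !cnt_kE eqxx.
have := cnt_label_gt0 k; have [->|_] := eqVneq (y k) y'; first by rewrite eqxx.
by move=> ?; congr nat_of_bool; apply/eqP/eqP => ?; lia.
Qed.

Lemma sum_A_k :
  (\sum_(k < l) A_k y y' k)%N =
  (\sum_(u | (u != y') && (cnt y u < (cnt y y').+1)%N) cnt y u)%N.
Proof.
by rewrite -(sum_pred_label (fun u => (u != y') && (cnt y u < (cnt y y').+1)%N));
  apply: eq_bigr => k _; rewrite A_kE.
Qed.

Lemma sum_B_k :
  (\sum_(k < l) B_k y y' k)%N =
  (\sum_(u | cnt y u == (cnt y y').+1) cnt y u + cnt y y')%N.
Proof.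
rewrite (eq_bigr _ (fun k _ => B_kE k)).
rewrite (sum_pred_label (fun u => (u == y') || (cnt y u == (cnt y y').+1)%N)).
rewrite (bigD1 y') ?eqxx //= addnC; congr (_ + _)%N.
apply: eq_bigl => u; case: eqVneq => [->|] /=; last by rewrite andbT.
by apply/esym/eqP; lia.
Qed.

End LeaveOneOut.

Local Open Scope ring_scope.

Theorem proposition5 (R : realFieldType) (Y : finType) (l : nat)
    (y : 'I_l -> Y) (y' : Y) (tau : R) (htau : 0 <= tau <= 1) :
  [/\ A_CCP R y y' = A_CP R y y',
      B_CCP R y y' = B_CP R y y'
    & p_CCP y y' tau = p_CP y y' tau].
Proof.
have HA : A_CCP R y y' = A_CP R y y' by rewrite /A_CCP /A_CP sum_A_k.
have HB : B_CCP R y y' = B_CP R y y' by rewrite /B_CCP /B_CP sum_B_k.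
by split => //; rewrite /p_CCP /p_CP HA HB.
Qed.
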